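(* Let $B$ be a Horn program, $E^+,E^-$ finite sets of ground atoms, and $H_1,H_2,H_3\in\mathcal{H}_{D,C}$ hypotheses with $H_3$ a specialization of $H_1$. If $S_{ACC}(H_2,B,E^+,E^-) - S_{ACC}(H_1,B,E^+,E^-) > fp(H_1,B,E^-)$, then $S_{ACC}(H_2,B,E^+,E^-) > S_{ACC}(H_3,B,E^+,E^-)$.
   Context: A definite clause is a clause with exactly one positive literal. A hypothesis is a finite set of definite clauses; $\mathcal{H}_{D,C}$ denotes the hypothesis space of hypotheses consistent with a declaration bias $D$ and hypothesis constraints $C$ (only membership matters). $B$ is background knowledge, $E^+$ positive and $E^-$ negative examples. For a hypothesis $H$: $tp(H,B,E^+)=|\{e\in E^+ : H\cup B\models e\}|$, $tn(H,B,E^-)=|\{e\in E^- : H\cup B\not\models e\}|$, $fn(H,B,E^+)=|E^+|-tp(H,B,E^+)$, $fp(H,B,E^-)=|E^-|-tn(H,B,E^-)$, and $S_{ACC}(H,B,E^+,E^-)=tp(H,B,E^+)+tn(H,B,E^-)$. A clause $C_1$ subsumes a clause $C_2$ iff there is a substitution $\theta$ with $C_1\theta\subseteq C_2$. A clausal theory $T_1$ subsumes $T_2$ ($T_1\preceq T_2$) iff every clause of $T_2$ is subsumed by some clause of $T_1$. $T_1$ is a generalization of $T_2$ iff $T_1\preceq T_2$, and a specialization of $T_2$ iff $T_2\preceq T_1$. *)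

From HB Require Import structures.
From mathcomp Require Import all_boot.
From mathcomp Require Import ssralg ssrint.
From mathcomp Require Import boolp.

Set Implicit Arguments.
Unset Strict Implicit.
Unset Printing Implicit Defensive.

Inductive term : Type :=
| Var of nat
| Fn of nat & seq term.

Fixpoint term_enc (t : term) : GenTree.tree nat :=
  match t with
  | Var n => GenTree.Leaf n
  | Fn f ts => GenTree.Node f (map term_enc ts)
  end.

Fixpoint term_dec (t : GenTree.tree nat) : term :=
  match t with
  | GenTree.Leaf n => Var n
  | GenTree.Node f ts => Fn f (map term_dec ts)
  end.

Fixpoint term_encK (t : term) : term_dec (term_enc t) = t :=
  match t return term_dec (term_enc t) = t with
  | Var n => erefl
  | Fn f ts => f_equal (Fn f)
      ((fix aux (us : seq term) : map term_dec (map term_enc us) = us :=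
          match us return map term_dec (map term_enc us) = us with
          | [::] => erefl
          | u :: us' => f_equal2 cons (term_encK u) (aux us')
          end) ts)
  end.

HB.instance Definition _ := Countable.copy term (can_type term_encK).

(* An atom p(t1,...,tn): predicate symbol and argument list. *)
Definition atom := (nat * seq term)%type.

Inductive literal : Type :=
| Pos of atom
| Neg of atom.

Definition lit_enc (l : literal) : atom + atom :=
  match l with Pos a => inl a | Neg a => inr a end.
Definition lit_dec (s : atom + atom) : literal :=
  match s with inl a => Pos a | inr a => Neg a end.
Lemma lit_encK : cancel lit_enc lit_dec. Proof. by case. Qed.
HB.instance Definition _ := Countable.copy literal (can_type lit_encK).

Definition clause := seq literal.

Definition is_pos (l : literal) : bool := if l is Pos _ then true else false.

Definition definite (C : clause) : bool := count is_pos C == 1.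
Definition horn (C : clause) : bool := count is_pos C <= 1.

Fixpoint vars_term (t : term) : seq nat :=
  match t with
  | Var n => [:: n]
  | Fn _ ts => flatten (map vars_term ts)
  end.
Definition ground_atom (a : atom) : bool :=
  all (fun t => vars_term t == [::]) a.2.

Fixpoint subst_term (th : nat -> term) (t : term) : term :=
  match t with
  | Var n => th n
  | Fn f ts => Fn f (map (subst_term th) ts)
  end.
Definition subst_atom (th : nat -> term) (a : atom) : atom :=
  (a.1, map (subst_term th) a.2).
Definition subst_lit (th : nat -> term) (l : literal) : literal :=
  match l with
  | Pos a => Pos (subst_atom th a)
  | Neg a => Neg (subst_atom th a)
  end.

Definition subsumes (C1 C2 : clause) : Prop :=
  exists th : nat -> term, forall l, l \in C1 -> subst_lit th l \in C2.

Definition theory_subsumes (T1 T2 : seq clause) : Prop :=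
  forall C2, C2 \in T2 -> exists2 C1, C1 \in T1 & subsumes C1 C2.

Definition generalization (T1 T2 : seq clause) : Prop := theory_subsumes T1 T2.
Definition specialization (T1 T2 : seq clause) : Prop := theory_subsumes T2 T1.

Record interp := Interp {
  dom : Type;
  ifun : nat -> seq dom -> dom;
  ipred : nat -> seq dom -> Prop }.

Fixpoint teval (M : interp) (v : nat -> dom M) (t : term) : dom M :=
  match t with
  | Var n => v n
  | Fn f ts => @ifun M f (map (teval v) ts)
  end.

Definition atom_holds (M : interp) (v : nat -> dom M) (a : atom) : Prop :=
  @ipred M a.1 (map (@teval M v) a.2).

Definition lit_holds (M : interp) (v : nat -> dom M) (l : literal) : Prop :=
  match l with
  | Pos a => atom_holds v a
  | Neg a => ~ atom_holds v a
  end.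

Definition clause_true (M : interp) (C : clause) : Prop :=
  forall v : nat -> dom M, exists2 l, l \in C & lit_holds v l.

Definition atom_true (M : interp) (a : atom) : Prop :=
  forall v : nat -> dom M, atom_holds v a.

Definition entails (T : seq clause) (e : atom) : Prop :=
  forall M : interp, (forall C, C \in T -> clause_true M C) -> atom_true M e.

Definition hypothesis := seq clause.
Definition is_hypothesis (H : hypothesis) : bool := all definite H.
Definition horn_program (B : seq clause) : bool := all horn B.

(* H ∪ B is represented by H ++ B *)
Definition tp (H B : seq clause) (Ep : seq atom) : nat :=
  count (fun e => `[< entails (H ++ B) e >]) Ep.
Definition tn (H B : seq clause) (En : seq atom) : nat :=
  count (fun e => `[< ~ entails (H ++ B) e >]) En.
Definition fn (H B : seq clause) (Ep : seq atom) : nat := size Ep - tp H B Ep.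
Definition fp (H B : seq clause) (En : seq atom) : nat := size En - tn H B En.
Definition S_ACC (H B : seq clause) (Ep En : seq atom) : nat :=
  tp H B Ep + tn H B En.

(* A specialization H3 of H1 is implied by H1 (each clause of H3 is an
   instance of a subclause of a clause of H1), so every positive example
   covered by H3 is covered by H1.  Hence
     S_ACC H3 = tp H3 + tn H3 <= tp H1 + |E-| = S_ACC H1 + fp H1 < S_ACC H2. *)
From mathcomp Require Import all_boot all_order ssralg ssrnum ssrint.
From mathcomp Require Import zify boolp.
Import Order.TTheory GRing.Theory Num.Theory.
Local Open Scope ring_scope.

Fixpoint teval_subst (M : interp) (v : nat -> dom M) (th : nat -> term) (t : term) :
  teval v (subst_term th t) = teval (fun n => teval v (th n)) t.
Proof.
case: t => [n|f ts] //=; congr ifun.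
by elim: ts => //= u us ->; rewrite teval_subst.
Qed.

Lemma lit_holds_subst (M : interp) (v : nat -> dom M) th l :
  lit_holds v (subst_lit th l) <-> lit_holds (fun n => teval v (th n)) l.
Proof.
have map_subst ts : map (teval v) (map (subst_term th) ts)
                    = map (teval (fun n => teval v (th n))) ts.
  by rewrite -map_comp; apply: eq_map => t; apply: teval_subst.
by case: l => [[p ts]|[p ts]]; rewrite /= /atom_holds /= map_subst.
Qed.

Lemma subsumes_clause_true (M : interp) C1 C2 :
  subsumes C1 C2 -> clause_true M C1 -> clause_true M C2.
Proof.
move=> [th subC12] C1_true v.
have [l lC1 hl] := C1_true (fun n => teval v (th n)).
by exists (subst_lit th l); [exact: subC12 | apply/lit_holds_subst].
Qed.

Lemma theory_subsumes_entails (T1 T2 B : seq clause) e :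
  theory_subsumes T1 T2 -> entails (T2 ++ B) e -> entails (T1 ++ B) e.
Proof.
move=> subT12 T2B_e M T1B_true; apply: T2B_e => C; rewrite mem_cat => /orP[CT2|CB].
- have [C1 C1T1 subC1] := subT12 C CT2.
  by apply: subsumes_clause_true subC1 _; apply: T1B_true; rewrite mem_cat C1T1.
- by apply: T1B_true; rewrite mem_cat CB orbT.
Qed.

Lemma tp_specialization (H1 H3 B : seq clause) Ep :
  specialization H3 H1 -> (tp H3 B Ep <= tp H1 B Ep)%N.
Proof.
move=> spec31; apply: sub_count => e /asboolP H3B_e; apply/asboolP.
exact: theory_subsumes_entails H3B_e.
Qed.

Lemma tn_le_size (H B : seq clause) En : (tn H B En <= size En)%N.
Proof. exact: count_size. Qed.

Lemma S_ACC_specialization (B H1 H3 : seq clause) Ep En :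
  specialization H3 H1 ->
  (S_ACC H3 B Ep En <= S_ACC H1 B Ep En + fp H1 B En)%N.
Proof.
move=> spec31; rewrite /S_ACC /fp -addnA subnKC ?tn_le_size //.
by rewrite leq_add ?tp_specialization ?tn_le_size.
Qed.

Theorem proposition4p4 (HDC : hypothesis -> Prop)
  (B : seq clause) (Ep En : seq atom) (H1 H2 H3 : hypothesis) :
  horn_program B ->
  uniq Ep -> all ground_atom Ep ->
  uniq En -> all ground_atom En ->
  is_hypothesis H1 -> is_hypothesis H2 -> is_hypothesis H3 ->
  HDC H1 -> HDC H2 -> HDC H3 ->
  specialization H3 H1 ->
  ((S_ACC H2 B Ep En)%:Z - (S_ACC H1 B Ep En)%:Z > (fp H1 B En)%:Z)%R ->
  (S_ACC H2 B Ep En > S_ACC H3 B Ep En)%N.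
Proof.
move=> _ _ _ _ _ _ _ _ _ _ _ spec31 gain.
have := S_ACC_specialization B H1 H3 Ep En spec31.
by move: gain; lia.
Qed.
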